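(* Let $S$ be a semigroup and let $\mathcal{R}'$ and $\leq_l$ be binary relations on $S$. Write $\mathcal{L}'$ for the relation $\leq_l \cap \geq_l$, write $L'_a$ for the $\mathcal{L}'$-class of $a\in S$, and (when $\leq_l$ is a preorder) write $\wedge$ for the meet of $\mathcal{L}'$-classes with respect to the partial order on $S/\mathcal{L}'$ induced by $\leq_l$, where such meets exist. Then $S$ has a semigroup of straight left I-quotients $Q$ (i.e. $S$ embeds as a straight left I-order in an inverse semigroup $Q$) such that \[\mathcal{R}^Q\cap(S\times S)=\mathcal{R}' \quad\text{and}\quad \leq_{\mathcal{L}^Q}\cap\,(S\times S)=\ \leq_l\] if and only if all of the following hold: $\mathcal{R}'$ is a left compatible equivalence relation on $S$; $\leq_l$ is a preorder on $S$ such that the $\mathcal{L}'$-classes form a meet semilattice under the associated partial order; and $S$ satisfies: \begin{itemize} \item[(M1)] For all $\alpha,\beta\in S$ there exist $\gamma,\delta\in S$ such that $\gamma\,\mathcal{R}'\,\delta\,\mathcal{R}'\,\delta\beta=\gamma\alpha$ and $L'_\alpha\wedge L'_\beta=L'_{\gamma\alpha}$. \item[(M2)] For all $\alpha,\beta,\gamma,\delta\in S$, $L'_\alpha\wedge L'_\beta=L'_\gamma$ implies $L'_{\alpha\delta}\wedge L'_{\beta\delta}=L'_{\gamma\delta}$. \item[(M3)] For all $\alpha,\beta\in S$, $\alpha\beta\leq_l\beta$. \item[(M4)] $\mathcal{R}'\subseteq\mathcal{R}^*$. \item[(M5)] For all $\alpha,\beta,\gamma,\delta\in S$ with $\gamma\,\mathcal{R}'\,\gamma\alpha\,\mathcal{L}'\,\alpha$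 and $\delta\,\mathcal{R}'\,\delta\beta\,\mathcal{L}'\,\beta$, we have $\gamma\,\mathcal{L}'\,\delta$ if and only if $\alpha\,\mathcal{R}'\,\beta$. \item[(M6)] For all $\alpha,\beta,\gamma\in S$, $\alpha\,\mathcal{L}'\,\beta\,\mathcal{L}'\,\gamma\alpha=\gamma\beta$ implies $\alpha=\beta$. \end{itemize}
   Context: For an element $a$ of an inverse semigroup $Q$, $a^{-1}$ denotes its unique inverse. A subsemigroup $S$ of an inverse semigroup $Q$ is a left I-order in $Q$ (and $Q$ a semigroup of left I-quotients of $S$) if every $q\in Q$ can be written $q=a^{-1}b$ with $a,b\in S$; it is straight (and $Q$ a semigroup of straight left I-quotients) if moreover $a,b$ can always be chosen with $a\,\mathcal{R}\,b$ in $Q$. $\mathcal{R}^Q$, $\mathcal{L}^Q$ denote Green's relations of $Q$ and $\leq_{\mathcal{L}^Q}$ the preorder $a\leq_{\mathcal{L}^Q}b \iff Q^1a\subseteq Q^1b$. On $S$, $\mathcal{R}^*$ is the relation: $a\,\mathcal{R}^*\,b$ iff for all $x,y\in S^1$, $xa=ya \Leftrightarrow xb=yb$. A relation is left compatible if $a\,\rho\,b$ implies $ca\,\rho\,cb$ for all $c\in S$. *)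

Set Implicit Arguments.

Definition rel (T : Type) := T -> T -> Prop.

Definition assoc_op (T : Type) (mul : T -> T -> T) : Prop :=
  forall a b c, mul a (mul b c) = mul (mul a b) c.

Definition is_inverse_of (Q : Type) (mul : Q -> Q -> Q) (a b : Q) : Prop :=
  mul (mul a b) a = a /\ mul (mul b a) b = b.

Definition inverse_semigroup (Q : Type) (mul : Q -> Q -> Q) : Prop :=
  assoc_op mul /\ forall a, exists! b, is_inverse_of mul a b.

Definition greenR (Q : Type) (mul : Q -> Q -> Q) (a b : Q) : Prop :=
  (a = b \/ exists x, a = mul b x) /\ (b = a \/ exists y, b = mul a y).

Definition greenLle (Q : Type) (mul : Q -> Q -> Q) (a b : Q) : Prop :=
  a = b \/ exists x, a = mul x b.

Definition injective_hom (S Q : Type) (mulS : S -> S -> S) (mulQ : Q -> Q -> Q)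
  (f : S -> Q) : Prop :=
  (forall a b, f a = f b -> a = b) /\ (forall a b, f (mulS a b) = mulQ (f a) (f b)).

Definition straight_left_I_order (S Q : Type) (mulQ : Q -> Q -> Q) (f : S -> Q) : Prop :=
  forall q : Q, exists a b x, is_inverse_of mulQ (f a) x /\ q = mulQ x (f b)
                              /\ greenR mulQ (f a) (f b).

(* left multiplication by elements of S^1 *)
Definition mul1 (S : Type) (mul : S -> S -> S) (x : option S) (a : S) : S :=
  match x with None => a | Some s => mul s a end.

Definition Rstar (S : Type) (mul : S -> S -> S) (a b : S) : Prop :=
  forall x y : option S, mul1 mul x a = mul1 mul y a <-> mul1 mul x b = mul1 mul y b.

Definition equivalence (S : Type) (R : rel S) : Prop :=
  (forall a, R a a) /\ (forall a b, R a b -> R b a) /\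
  (forall a b c, R a b -> R b c -> R a c).

Definition left_compatible (S : Type) (mul : S -> S -> S) (R : rel S) : Prop :=
  forall a b c, R a b -> R (mul c a) (mul c b).

Definition preorder (S : Type) (le : rel S) : Prop :=
  (forall a, le a a) /\ (forall a b c, le a b -> le b c -> le a c).

Definition Lprime (S : Type) (le : rel S) (a b : S) : Prop := le a b /\ le b a.

(* L'_a /\ L'_b = L'_c  : the L'-class of c is the meet of the classes of a and b
   in the partial order S/L' induced by le (written out on representatives). *)
Definition meet_is (S : Type) (le : rel S) (a b c : S) : Prop :=
  le c a /\ le c b /\ forall d, le d a -> le d b -> le d c.

Definition classes_meet_semilattice (S : Type) (le : rel S) : Prop :=
  forall a b, exists c, meet_is le a b c.

(* Necessity: in an inverse semigroup, a R b iff a a^-1 = b b^-1, a <=_L b iff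
   a = a b^-1 b, and idempotents commute; (M1) comes from writing a b^-1 = c^-1 d
   with c R d (straightness), and the other conditions are computations with
   these idempotents.
   Sufficiency: Q consists of the pairs (a, b) with a R' b, read as a^-1 b, where
   (a, b) and (x a, x b) are identified whenever x a L' a.  The product
   (a, b)(c, d) = (g a, e d), where g b = e c represents the meet of the
   L'-classes of b and c (M1), is well defined by (M2) and (M4); (b, a) is an
   inverse of (a, b), and by (M6) the idempotents are the diagonal classes
   (a, a), which commute, so Q is inverse.  S embeds by a |-> (k, k a) for any
   k R' k a L' a; (M5) makes this independent of k and identifies R^Q on S
   with R', and (M6) gives injectivity. *)

From Stdlib Require Import ClassicalEpsilon FunctionalExtensionality PropExtensionality ProofIrrelevance Setoid.

Set Implicit Arguments.

Section InverseSemigroup.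
Variables (Q : Type) (m : Q -> Q -> Q).
Hypothesis HQ : inverse_semigroup m.
Local Infix "**" := m (at level 40, left associativity).

Lemma mulA a b c : a ** (b ** c) = a ** b ** c.
Proof. exact (proj1 HQ a b c). Qed.

Lemma mul_eq_l (u v : Q) : u = v -> forall x, x ** u = x ** v.
Proof. intros ->; reflexivity. Qed.

(* Rewrites with [u = v] modulo associativity, also when [u] is the tail of a
   longer left-associated product (via the reassociated [x ** u = x ** v]). *)
Ltac rewrite_tail H :=
  first [ rewrite H
        | let H' := fresh in pose proof H as H'; rewrite !mulA in H'; rewrite H'; clear H'
        | let H' := fresh in pose proof (mul_eq_l H) as H';
          repeat setoid_rewrite mulA in H'; rewrite H'; clear H' ].
Ltac rewrite_tail_rev H :=
  first [ rewrite <- H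
        | let H' := fresh in pose proof H as H'; rewrite !mulA in H'; rewrite <- H'; clear H'
        | let H' := fresh in pose proof (mul_eq_l H) as H';
          repeat setoid_rewrite mulA in H'; rewrite <- H'; clear H' ].
Ltac assoc := repeat rewrite mulA.

Definition inv (a : Q) : Q :=
  proj1_sig (constructive_indefinite_description _
    (match proj2 HQ a with ex_intro _ b (conj H _) => ex_intro _ b H end)).

Lemma inv_spec a : is_inverse_of m a (inv a).
Proof. unfold inv. destruct constructive_indefinite_description as [b Hb]. exact Hb. Qed.

Lemma inv_unique a b : is_inverse_of m a b -> b = inv a.
Proof.
  intro H. destruct (proj2 HQ a) as [c [_ Hc]].
  rewrite <- (Hc _ H). apply Hc, inv_spec.
Qed.

Lemma mul_inv_mul a : a ** inv a ** a = a.
Proof. apply (inv_spec a). Qed.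

Lemma inv_mul_inv a : inv a ** a ** inv a = inv a.
Proof. apply (inv_spec a). Qed.

Lemma invK a : inv (inv a) = a.
Proof. symmetry. apply inv_unique. split; apply inv_spec. Qed.

Lemma idem_inv e : e ** e = e -> inv e = e.
Proof. intro He. symmetry. apply inv_unique. split; rewrite !He; reflexivity. Qed.

Lemma idem_mul e f : e ** e = e -> f ** f = f -> e ** f ** (e ** f) = e ** f.
Proof.
  intros He Hf. set (x := inv (e ** f)).
  assert (Hx : is_inverse_of m (e ** f) x) by apply inv_spec.
  destruct Hx as [Hx1 Hx2]. rewrite !mulA in Hx1, Hx2.
  (* [f x e] is another inverse of [e f], so it equals [x], which is thus idempotent *)
  assert (Ex : f ** x ** e = x).
  { unfold x at 2. apply inv_unique. split; assoc.
    - rewrite_tail He. rewrite_tail Hf. exact Hx1.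
    - rewrite_tail He. rewrite_tail Hf. rewrite_tail Hx2. reflexivity. }
  assert (Hxx : x ** x = x).
  { rewrite <- Ex at 1 2. assoc. rewrite_tail Hx2. exact Ex. }
  rewrite <- (invK (e ** f)). fold x. rewrite (idem_inv Hxx). exact Hxx.
Qed.

Lemma idem_comm e f : e ** e = e -> f ** f = f -> e ** f = f ** e.
Proof.
  intros He Hf.
  pose proof (idem_mul He Hf) as Hef. pose proof (idem_mul Hf He) as Hfe.
  rewrite <- (idem_inv Hef). symmetry. apply inv_unique.
  split; assoc.
  - rewrite_tail Hf. rewrite_tail He. rewrite !mulA in Hef. exact Hef.
  - rewrite_tail He. rewrite_tail Hf. rewrite !mulA in Hfe. exact Hfe.
Qed.

Lemma inv_mul_idem a : inv a ** a ** (inv a ** a) = inv a ** a.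
Proof. assoc. rewrite_tail (mul_inv_mul a). reflexivity. Qed.

Lemma mul_inv_idem a : a ** inv a ** (a ** inv a) = a ** inv a.
Proof. assoc. rewrite_tail (mul_inv_mul a). reflexivity. Qed.

Lemma comm_inv_mul a b : inv a ** a ** (inv b ** b) = inv b ** b ** (inv a ** a).
Proof. apply idem_comm; apply inv_mul_idem. Qed.

Lemma comm_mul_inv a b : a ** inv a ** (b ** inv b) = b ** inv b ** (a ** inv a).
Proof. apply idem_comm; apply mul_inv_idem. Qed.

Lemma comm_inv_mul_mul_inv a b : inv a ** a ** (b ** inv b) = b ** inv b ** (inv a ** a).
Proof. apply idem_comm; [apply inv_mul_idem | apply mul_inv_idem]. Qed.

Lemma inv_mul a b : inv (a ** b) = inv b ** inv a.
Proof.
  symmetry. apply inv_unique. split; assoc.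
  - rewrite_tail_rev (comm_inv_mul_mul_inv a b). assoc.
    rewrite_tail (mul_inv_mul a). rewrite_tail (mul_inv_mul b). reflexivity.
  - rewrite_tail (comm_inv_mul_mul_inv a b). assoc.
    rewrite_tail (inv_mul_inv b). rewrite_tail (inv_mul_inv a). reflexivity.
Qed.

Lemma greenR_iff a b : greenR m a b <-> a ** inv a = b ** inv b.
Proof.
  split.
  - intros [Hab Hba].
    assert (Ka : b ** inv b ** a = a).
    { destruct Hab as [-> | [x ->]]; [apply mul_inv_mul |].
      assoc. rewrite_tail (mul_inv_mul b). reflexivity. }
    assert (Kb : a ** inv a ** b = b).
    { destruct Hba as [-> | [x ->]]; [apply mul_inv_mul |].
      assoc. rewrite_tail (mul_inv_mul a). reflexivity. }
    assert (Ea : b ** inv b ** (a ** inv a) = a ** inv a) by (assoc; rewrite Ka; reflexivity).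
    assert (Eb : a ** inv a ** (b ** inv b) = b ** inv b) by (assoc; rewrite Kb; reflexivity).
    rewrite <- Ea, comm_mul_inv. exact Eb.
  - intro H. split; right.
    + exists (inv b ** a). rewrite mulA, <- H. symmetry; apply mul_inv_mul.
    + exists (inv a ** b). rewrite mulA, H. symmetry; apply mul_inv_mul.
Qed.

Lemma greenLle_iff a b : greenLle m a b <-> a ** (inv b ** b) = a.
Proof.
  split.
  - intros [-> | [x ->]]; assoc; [apply mul_inv_mul |].
    rewrite_tail (mul_inv_mul b). reflexivity.
  - intro H. right. exists (a ** inv b). rewrite <- mulA. symmetry; exact H.
Qed.

Lemma greenL_iff a b : Lprime (greenLle m) a b <-> inv a ** a = inv b ** b.
Proof.
  unfold Lprime. rewrite !greenLle_iff. split.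
  - intros [Hab Hba].
    assert (Ea : inv a ** a ** (inv b ** b) = inv a ** a) by (rewrite <- mulA, Hab; reflexivity).
    assert (Eb : inv b ** b ** (inv a ** a) = inv b ** b) by (rewrite <- mulA, Hba; reflexivity).
    rewrite <- Ea, comm_inv_mul. exact Eb.
  - intro H. split; [rewrite <- H | rewrite H]; rewrite mulA; apply mul_inv_mul.
Qed.

Lemma greenLle_meet a b z : inv z ** z = inv a ** a ** (inv b ** b) ->
  meet_is (greenLle m) a b z.
Proof.
  intro H. unfold meet_is. rewrite !greenLle_iff.
  assert (Z : z ** (inv a ** a) ** (inv b ** b) = z).
  { rewrite <- mulA, <- H, mulA. apply mul_inv_mul. }
  split; [| split].
  - rewrite <- Z at 1. assoc. rewrite_tail_rev (comm_inv_mul a b). assoc.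
    rewrite_tail (inv_mul_idem a). rewrite !mulA in Z. exact Z.
  - rewrite <- Z at 1. assoc. rewrite_tail (inv_mul_idem b). rewrite !mulA in Z. exact Z.
  - intros d Ha Hb. rewrite greenLle_iff in Ha, Hb |- *. rewrite H, mulA, Ha. exact Hb.
Qed.

Lemma straight_quotient_meet a b g d :
  inv g ** d = a ** inv b -> g ** inv g = d ** inv d ->
  g ** a = d ** b /\ d ** inv d = d ** b ** inv (d ** b) /\
  inv (g ** a) ** (g ** a) = inv a ** a ** (inv b ** b).
Proof.
  intros Hq HR.
  assert (Hg : inv g ** g = a ** inv b ** b ** inv a).
  { assert (K : inv g ** d ** inv (inv g ** d) = inv g ** g).
    { rewrite inv_mul, invK. assoc. rewrite_tail_rev HR. rewrite_tail (inv_mul_inv g). reflexivity. }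
    rewrite <- K, Hq, inv_mul, invK. assoc. reflexivity. }
  assert (Hd : inv d ** d = b ** inv a ** a ** inv b).
  { assert (K : inv (inv g ** d) ** (inv g ** d) = inv d ** d).
    { rewrite inv_mul, invK. assoc. rewrite_tail HR. rewrite_tail (inv_mul_inv d). reflexivity. }
    rewrite <- K, Hq, inv_mul, invK. assoc. reflexivity. }
  assert (Hga : g ** a = d ** b).
  { assert (K : g ** a = g ** a ** (inv b ** b)).
    { rewrite <- (mul_inv_mul g) at 1. rewrite <- (mulA g (inv g) g), Hg. assoc.
      rewrite_tail (comm_inv_mul b a). assoc. rewrite_tail (mul_inv_mul a). reflexivity. }
    rewrite K. assoc. rewrite <- (mulA g a (inv b)), <- Hq.
    assoc. rewrite_tail HR. rewrite_tail (mul_inv_mul d). reflexivity. }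
  split; [exact Hga | split].
  - rewrite inv_mul. symmetry.
    assert (K : d ** b ** (inv b ** inv d) = d ** (inv d ** d) ** b ** inv b ** inv d)
      by (rewrite (mulA d (inv d) d), mul_inv_mul; assoc; reflexivity).
    rewrite K, Hd. assoc. rewrite_tail (inv_mul_inv b). rewrite_tail_rev Hd.
    rewrite_tail (mul_inv_mul d). reflexivity.
  - rewrite inv_mul. assoc. rewrite <- (mulA (inv a) (inv g) g), Hg.
    assoc. rewrite_tail (comm_inv_mul b a). rewrite_tail (inv_mul_idem a). assoc. reflexivity.
Qed.

Lemma greenL_mul_fix g a : inv (g ** a) ** (g ** a) = inv a ** a -> inv g ** g ** a = a.
Proof.
  intro H. rewrite inv_mul in H. rewrite !mulA in H.
  rewrite <- (mul_inv_mul a) at 1. assoc.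
  rewrite_tail (comm_inv_mul_mul_inv g a). rewrite_tail H. apply mul_inv_mul.
Qed.

Lemma greenR_L_prefix g a :
  g ** inv g = g ** a ** inv (g ** a) -> inv (g ** a) ** (g ** a) = inv a ** a ->
  inv g ** g = a ** inv a.
Proof.
  intros HR HL. apply greenL_mul_fix in HL.
  assert (K1 : inv g ** g ** (a ** inv a) = a ** inv a) by (assoc; rewrite HL; reflexivity).
  assert (K2 : inv g ** g = inv g ** g ** (a ** inv a) ** (inv g ** g)).
  { rewrite <- (inv_mul_inv g) at 1. rewrite <- (mulA (inv g) g (inv g)), HR, inv_mul.
    assoc. reflexivity. }
  rewrite K2. assoc. rewrite_tail (comm_inv_mul_mul_inv g a). rewrite_tail (inv_mul_idem g).
  rewrite_tail_rev (comm_inv_mul_mul_inv g a). rewrite !mulA in K1. rewrite K1. reflexivity.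
Qed.

Lemma greenR_left_factor a b : a ** inv a = b ** inv b -> b = a ** (inv a ** b).
Proof. intro H. rewrite mulA, H. symmetry. apply mul_inv_mul. Qed.

Lemma greenLle_meet_mulr g a b d : inv g ** g = inv a ** a ** (inv b ** b) ->
  inv (g ** d) ** (g ** d) = inv (a ** d) ** (a ** d) ** (inv (b ** d) ** (b ** d)).
Proof.
  intro H. rewrite !inv_mul. assoc. rewrite <- (mulA (inv d) (inv g) g), H.
  assoc. rewrite_tail_rev (comm_inv_mul_mul_inv b d). rewrite_tail (mul_inv_mul d). reflexivity.
Qed.

End InverseSemigroup.

Section UniqueInverses.
Variables (T : Type) (op : T -> T -> T).
Hypothesis opA : forall a b c, op a (op b c) = op (op a b) c.
Hypothesis idem_op_comm : forall e f, op e e = e -> op f f = f -> op e f = op f e.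
Local Infix "**" := op (at level 40, left associativity).

Lemma inverse_unique_of_idem_comm a x y :
  is_inverse_of op a x -> is_inverse_of op a y -> x = y.
Proof.
  intros [X1 X2] [Y1 Y2].
  assert (Ixa : x ** a ** (x ** a) = x ** a) by (rewrite opA, X2; reflexivity).
  assert (Iya : y ** a ** (y ** a) = y ** a) by (rewrite opA, Y2; reflexivity).
  assert (Iax : a ** x ** (a ** x) = a ** x) by (rewrite opA, X1; reflexivity).
  assert (Iay : a ** y ** (a ** y) = a ** y) by (rewrite opA, Y1; reflexivity).
  assert (Ex : x = y ** a ** x).
  { rewrite <- X2 at 1. rewrite <- Y1 at 1.
    replace (x ** (a ** y ** a) ** x) with (x ** a ** (y ** a) ** x) by (rewrite !opA; reflexivity).
    rewrite (idem_op_comm Ixa Iya), <- !opA, (opA x a x), X2, !opA. reflexivity. }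
  assert (Ey : y = y ** a ** x).
  { rewrite <- Y2 at 1. rewrite <- X1 at 1.
    replace (y ** (a ** x ** a) ** y) with (y ** (a ** x ** (a ** y))) by (rewrite !opA; reflexivity).
    rewrite (idem_op_comm Iax Iay), !opA, Y2. reflexivity. }
  congruence.
Qed.

End UniqueInverses.

Section Conditions.
Variables (S : Type) (mul : S -> S -> S) (R' le : rel S).

Definition condM1 : Prop := forall al be, exists ga de,
  R' ga de /\ R' de (mul de be) /\ mul de be = mul ga al /\ meet_is le al be (mul ga al).

Definition condM2 : Prop := forall al be ga de,
  meet_is le al be ga -> meet_is le (mul al de) (mul be de) (mul ga de).

Definition condM3 : Prop := forall al be, le (mul al be) be.

Definition condM4 : Prop := forall a b, R' a b -> Rstar mul a b.

Definition condM5 : Prop := forall al be ga de,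
  R' ga (mul ga al) -> Lprime le (mul ga al) al ->
  R' de (mul de be) -> Lprime le (mul de be) be ->
  (Lprime le ga de <-> R' al be).

Definition condM6 : Prop := forall al be ga,
  Lprime le al be -> Lprime le be (mul ga al) -> mul ga al = mul ga be -> al = be.

Definition has_straight_quotient : Prop :=
  exists (Q : Type) (mulQ : Q -> Q -> Q) (f : S -> Q),
    inverse_semigroup mulQ /\ injective_hom mul mulQ f /\ straight_left_I_order mulQ f /\
    (forall a b, greenR mulQ (f a) (f b) <-> R' a b) /\
    (forall a b, greenLle mulQ (f a) (f b) <-> le a b).

End Conditions.

Section Necessity.
Variables (S : Type) (mul : S -> S -> S) (R' le : rel S).
Variables (Q : Type) (mulQ : Q -> Q -> Q) (f : S -> Q).
Hypothesis HQ : inverse_semigroup mulQ.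
Hypothesis Hf : injective_hom mul mulQ f.
Hypothesis Hst : straight_left_I_order mulQ f.
Hypothesis HR : forall a b, greenR mulQ (f a) (f b) <-> R' a b.
Hypothesis HL : forall a b, greenLle mulQ (f a) (f b) <-> le a b.
Local Infix "**" := mulQ (at level 40, left associativity).
Local Notation inv := (@inv Q mulQ HQ).

Let f_mul a b : f (mul a b) = f a ** f b := proj2 Hf a b.
Let f_inj a b : f a = f b -> a = b := proj1 Hf a b.
Let mulQA a b c : a ** (b ** c) = a ** b ** c := proj1 HQ a b c.

Lemma R'_iff a b : R' a b <-> f a ** inv (f a) = f b ** inv (f b).
Proof. rewrite <- HR. apply greenR_iff. Qed.

Lemma le_iff a b : le a b <-> f a ** (inv (f b) ** f b) = f a.
Proof. rewrite <- HL. apply greenLle_iff. Qed.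

Lemma L'_iff a b : Lprime le a b <-> inv (f a) ** f a = inv (f b) ** f b.
Proof. rewrite <- greenL_iff. unfold Lprime. rewrite !HL. reflexivity. Qed.

Lemma meet_is_of_idem a b c :
  inv (f c) ** f c = inv (f a) ** f a ** (inv (f b) ** f b) -> meet_is le a b c.
Proof.
  intro H. destruct (greenLle_meet HQ _ _ _ H) as [Hca [Hcb Hmax]].
  rewrite HL in Hca, Hcb. split; [exact Hca | split; [exact Hcb |]].
  intros d Hda Hdb. apply HL, Hmax; apply HL; assumption.
Qed.

Lemma R'_equivalence : equivalence R'.
Proof. split; [| split]; intros; rewrite !R'_iff in *; congruence. Qed.

Lemma R'_left_compatible : left_compatible mul R'.
Proof.
  intros a b c H. rewrite R'_iff in *. rewrite !f_mul, !inv_mul, !mulQA.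
  rewrite <- (mulQA (f c) (f a)), <- (mulQA (f c) (f b)), H. reflexivity.
Qed.

Lemma le_preorder : preorder le.
Proof.
  split.
  - intro a. apply le_iff. rewrite mulQA. apply mul_inv_mul.
  - intros a b c Hab Hbc. rewrite le_iff in *. rewrite <- Hab at 1.
    rewrite <- !mulQA, Hbc. exact Hab.
Qed.

Lemma straight_meet_factorization al be : exists ga de,
  R' ga de /\ R' de (mul de be) /\ mul de be = mul ga al /\
  inv (f (mul ga al)) ** f (mul ga al) = inv (f al) ** f al ** (inv (f be) ** f be).
Proof.
  destruct (Hst (f al ** inv (f be))) as (a & b & x & Hx & Hq & Hab).
  apply (inv_unique HQ) in Hx. subst x. apply (greenR_iff HQ) in Hab.
  destruct (straight_quotient_meet HQ (f al) (f be) (f a) (f b) (eq_sym Hq) Hab)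
    as (Ega & Ed & Emeet).
  exists a, b. rewrite R'_iff, R'_iff, !f_mul. repeat split; auto.
  apply f_inj. rewrite !f_mul. symmetry. exact Ega.
Qed.

Lemma nec_meet_semilattice : classes_meet_semilattice le.
Proof.
  intros a b. destruct (straight_meet_factorization a b) as (g & d & _ & _ & _ & H).
  exists (mul g a). apply meet_is_of_idem, H.
Qed.

Lemma nec_M1 : condM1 mul R' le.
Proof.
  intros al be. destruct (straight_meet_factorization al be) as (g & d & H1 & H2 & H3 & H4).
  exists g, d. do 3 (split; [assumption |]). apply meet_is_of_idem, H4.
Qed.

Lemma nec_M2 : condM2 mul le.
Proof.
  intros al be ga de Hm. destruct (straight_meet_factorization al be) as (g & d & _ & _ & _ & H).
  assert (K : inv (f ga) ** f ga = inv (f (mul g al)) ** f (mul g al)).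
  { apply L'_iff. pose proof (meet_is_of_idem H) as (n1 & n2 & n3).
    destruct Hm as (m1 & m2 & m3). split; auto. }
  apply meet_is_of_idem. rewrite !f_mul. apply greenLle_meet_mulr. rewrite K. exact H.
Qed.

Lemma nec_M3 : condM3 mul le.
Proof. intros al be. apply HL. right. exists (f al). apply f_mul. Qed.

Lemma nec_M4 : condM4 mul R'.
Proof.
  (* [a R b] gives [f b = f a ** u], so every left cancellation for [a] holds for [b] *)
  assert (Hcancel : forall a b x y, R' a b -> mul1 mul x a = mul1 mul y a -> mul1 mul x b = mul1 mul y b).
  { intros a b x y Hab E. apply R'_iff, greenR_left_factor in Hab.
    set (u := inv (f a) ** f b) in Hab. apply f_inj.
    destruct x as [s |], y as [t |]; simpl in *; rewrite ?f_mul, Hab, ?mulQA, <- ?f_mul;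
      first [reflexivity | rewrite E; reflexivity | rewrite <- E; reflexivity]. }
  intros a b Hab x y. split; apply Hcancel; [| apply R'_equivalence]; exact Hab.
Qed.

Lemma nec_M5 : condM5 mul R' le.
Proof.
  intros al be ga de H1 H2 H3 H4. rewrite !L'_iff, !R'_iff in *. rewrite !f_mul in *.
  rewrite (greenR_L_prefix HQ _ _ H1 H2), (greenR_L_prefix HQ _ _ H3 H4).
  reflexivity.
Qed.

Lemma nec_M6 : condM6 mul le.
Proof.
  intros al be ga H1 H2 H3. rewrite !L'_iff in *. apply f_inj.
  assert (Ka : inv (f ga ** f al) ** (f ga ** f al) = inv (f al) ** f al)
    by (rewrite <- f_mul; congruence).
  assert (Kb : inv (f ga ** f be) ** (f ga ** f be) = inv (f be) ** f be)
    by (rewrite <- f_mul, <- H3; congruence).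
  apply greenL_mul_fix in Ka. apply greenL_mul_fix in Kb.
  rewrite <- Ka, <- Kb, <- !mulQA, <- !f_mul, H3. reflexivity.
Qed.

Lemma necessity :
  equivalence R' /\ left_compatible mul R' /\ preorder le /\ classes_meet_semilattice le /\
  condM1 mul R' le /\ condM2 mul le /\ condM3 mul le /\ condM4 mul R' /\
  condM5 mul R' le /\ condM6 mul le.
Proof.
  exact (conj R'_equivalence (conj R'_left_compatible (conj le_preorder
        (conj nec_meet_semilattice (conj nec_M1 (conj nec_M2 (conj nec_M3
        (conj nec_M4 (conj nec_M5 nec_M6))))))))).
Qed.

End Necessity.

Section Sufficiency.
Variables (S : Type) (mul : S -> S -> S) (R' le : rel S).
Hypothesis Hassoc : assoc_op mul.
Hypothesis HR'eqv : equivalence R'.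
Hypothesis HR'comp : left_compatible mul R'.
Hypothesis Hle : preorder le.
Hypothesis HM1 : condM1 mul R' le.
Hypothesis HM2 : condM2 mul le.
Hypothesis HM3 : condM3 mul le.
Hypothesis HM4 : condM4 mul R'.
Hypothesis HM5 : condM5 mul R' le.
Hypothesis HM6 : condM6 mul le.

Local Infix "**" := mul (at level 40, left associativity).
Local Notation L' := (Lprime le).
Local Notation meet := (meet_is le).

Let mulSA a b c : a ** (b ** c) = a ** b ** c := Hassoc a b c.
Let R'_refl a : R' a a := proj1 HR'eqv a.
Let R'_sym a b : R' a b -> R' b a := proj1 (proj2 HR'eqv) a b.
Let R'_trans a b c : R' a b -> R' b c -> R' a c := proj2 (proj2 HR'eqv) a b c.
Let R'_mull a b c : R' a b -> R' (c ** a) (c ** b) := @HR'comp a b c.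
Let le_refl a : le a a := proj1 Hle a.
Let le_trans a b c : le a b -> le b c -> le a c := proj2 Hle a b c.

Lemma L'_refl a : L' a a.
Proof. split; apply le_refl. Qed.

Lemma L'_sym a b : L' a b -> L' b a.
Proof. intros [H1 H2]; split; assumption. Qed.

Lemma L'_trans a b c : L' a b -> L' b c -> L' a c.
Proof. intros [H1 H2] [H3 H4]; split; eapply le_trans; eauto. Qed.

Lemma R'_cancel a b x y : R' a b -> x ** a = y ** a -> x ** b = y ** b.
Proof. intros H E. exact (proj1 (HM4 H (Some x) (Some y)) E). Qed.

Lemma le_mulr a b c : le a b -> le (a ** c) (b ** c).
Proof.
  intro H. assert (M : meet a b a) by (split; [apply le_refl | split; auto]).
  apply (HM2 c) in M. apply M.
Qed.

Lemma L'_mulr a b c : L' a b -> L' (a ** c) (b ** c).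
Proof. intros [H1 H2]; split; apply le_mulr; assumption. Qed.

Lemma meet_L' a b c c' : meet a b c -> meet a b c' -> L' c c'.
Proof. intros (H1 & H2 & H3) (K1 & K2 & K3). split; auto. Qed.

Lemma meet_L'_args a b a' b' c : L' a a' -> L' b b' -> meet a b c -> meet a' b' c.
Proof.
  intros [A1 A2] [B1 B2] (H1 & H2 & H3).
  split; [eauto | split; [eauto |]]. intros d D1 D2. apply H3; eauto.
Qed.

Lemma meet_comm a b c : meet a b c -> meet b a c.
Proof. intros (H1 & H2 & H3). split; [| split]; auto. Qed.

Lemma meet_le_L' a b c : le a b -> meet a b c -> L' c a.
Proof. intros H (H1 & H2 & H3). split; auto. Qed.

Lemma meet_L'_L' a b c : L' a b -> meet a b c -> L' c a.
Proof. intros [H _]. apply meet_le_L', H. Qed.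

Lemma meet_of_L' a b c : L' a b -> L' c a -> meet a b c.
Proof. intros [H1 H2] [H3 H4]. split; [| split]; eauto. Qed.

Lemma exists_stabilizer q : exists k, R' k (k ** q) /\ L' (k ** q) q.
Proof.
  destruct (HM1 q q) as (g & d & _ & Hd & Eq & Hm).
  exists d. split; [exact Hd |]. rewrite Eq. exact (meet_L'_L' (L'_refl q) Hm).
Qed.

Lemma L'_stable_R' p q x : R' p q -> L' (x ** p) p -> L' (x ** q) q.
Proof.
  intros Hpq Hx.
  destruct (exists_stabilizer q) as (k & Kq & Kl).
  destruct (HM1 (x ** p) p) as (g & d & _ & Hd & Eq & Hm).
  assert (Hdp : L' (d ** p) p).
  { rewrite Eq. exact (L'_trans (meet_L'_L' Hx Hm) Hx). }
  assert (Hkd : L' k d) by exact (proj2 (HM5 Kq Kl Hd Hdp) (R'_sym Hpq)).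
  assert (E : d ** q = g ** x ** q) by (apply (R'_cancel Hpq); rewrite Eq; apply mulSA).
  split; [apply HM3 |].
  apply le_trans with (k ** q); [apply Kl |].
  apply le_trans with (d ** q); [exact (proj1 (L'_mulr q Hkd)) |].
  rewrite E, <- mulSA. apply HM3.
Qed.

Lemma L'_mulr_R' a b s t : R' a b -> L' (s ** b) (t ** b) -> L' (s ** a) (t ** a).
Proof.
  intros Hab H.
  destruct (HM1 (s ** b) (t ** b)) as (g & d & _ & _ & Eq & Hm).
  assert (Gs : L' (g ** (s ** b)) (s ** b)) by exact (meet_L'_L' H Hm).
  assert (Gt : L' (d ** (t ** b)) (t ** b)) by (rewrite Eq; exact (L'_trans Gs H)).
  apply (L'_stable_R' (R'_mull s (R'_sym Hab))) in Gs.
  apply (L'_stable_R' (R'_mull t (R'_sym Hab))) in Gt.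
  assert (E : g ** s ** a = d ** t ** a).
  { apply (R'_cancel (R'_sym Hab)). rewrite <- !mulSA. auto. }
  rewrite <- !mulSA in E.
  apply (L'_trans (L'_sym Gs)). rewrite E. exact Gt.
Qed.

Lemma le_mulr_R' c d x y : R' c d -> le (x ** c) (y ** c) -> le (x ** d) (y ** d).
Proof.
  intros Hcd H.
  destruct (HM1 (x ** c) (y ** c)) as (g & v & _ & _ & Eq & Hm).
  assert (G : L' (g ** (x ** c)) (x ** c)) by exact (meet_le_L' H Hm).
  rewrite <- Eq, mulSA in G. apply L'_sym, (L'_mulr_R' (R'_sym Hcd)) in G.
  apply (le_trans (proj1 G)). rewrite <- mulSA. apply HM3.
Qed.

Lemma meet_mulr_R' c d x y z :
  R' c d -> meet (x ** c) (y ** c) (z ** c) -> meet (x ** d) (y ** d) (z ** d).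
Proof.
  intros Hcd (H1 & H2 & H3).
  split; [apply (le_mulr_R' Hcd); auto | split; [apply (le_mulr_R' Hcd); auto |]].
  intros w W1 W2.
  destruct (HM1 w d) as (g & v & _ & _ & Eq & Hm).
  assert (G : L' (v ** d) w) by (rewrite Eq; apply (meet_le_L' (le_trans W1 (HM3 _ _)) Hm)).
  destruct G as [G1 G2].
  apply (le_trans G2), (le_mulr_R' Hcd), H3;
    apply (le_mulr_R' (R'_sym Hcd)); eauto.
Qed.

(* [(a, b)] and [(c, d)] both stand for [a^-1 b] in the quotient. *)
Definition pair_equiv a b c d : Prop :=
  exists x y, x ** a = y ** c /\ x ** b = y ** d /\ L' (x ** a) a /\ L' a c.

Lemma pair_equiv_refl a b : pair_equiv a b a b.
Proof.
  destruct (exists_stabilizer a) as (k & _ & K).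
  exists k, k. split; [| split; [| split]]; auto; apply L'_refl.
Qed.

Lemma pair_equiv_sym a b c d : pair_equiv a b c d -> pair_equiv c d a b.
Proof.
  intros (x & y & E1 & E2 & L1 & L2). exists y, x. split; [| split; [| split]]; auto.
  - rewrite <- E1. exact (L'_trans L1 L2).
  - apply L'_sym, L2.
Qed.

Lemma pair_equiv_trans a b c d e f :
  R' c d -> pair_equiv a b c d -> pair_equiv c d e f -> pair_equiv a b e f.
Proof.
  intros Hcd (x & y & E1 & E2 & L1 & L2) (u & v & F1 & F2 & N1 & N2).
  assert (Yc : L' (y ** c) c) by (rewrite <- E1; eauto using L'_trans).
  destruct (HM1 (y ** c) (u ** c)) as (g & d' & _ & _ & Eq & Hm).
  assert (G : L' (g ** (y ** c)) (y ** c))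
    by exact (meet_L'_L' (L'_trans Yc (L'_sym N1)) Hm).
  assert (Ed : g ** y ** d = d' ** u ** d)
    by (apply (R'_cancel Hcd); rewrite <- !mulSA; auto).
  exists (g ** x), (d' ** v). split; [| split; [| split]].
  - rewrite <- !mulSA, E1, <- F1, !mulSA, <- (mulSA d' u c), Eq, mulSA. reflexivity.
  - rewrite <- !mulSA, E2, <- F2, !mulSA. exact Ed.
  - rewrite <- mulSA, E1. apply (L'_trans G). rewrite <- E1. exact L1.
  - exact (L'_trans L2 N2).
Qed.

Lemma pair_equiv_L'_snd a b c d : R' a b -> R' c d -> pair_equiv a b c d -> L' b d.
Proof.
  intros Hab Hcd (x & y & E1 & E2 & L1 & L2).
  assert (Xb : L' (x ** b) b) by exact (L'_stable_R' Hab L1).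
  assert (Yc : L' (y ** c) c) by (rewrite <- E1; eauto using L'_trans).
  apply (L'_trans (L'_sym Xb)). rewrite E2. exact (L'_stable_R' Hcd Yc).
Qed.

Lemma pair_equiv_swap a b c d : R' a b -> R' c d -> pair_equiv a b c d -> pair_equiv b a d c.
Proof.
  intros Hab Hcd H. pose proof (pair_equiv_L'_snd Hab Hcd H) as Lbd.
  destruct H as (x & y & E1 & E2 & L1 & L2).
  exists x, y. split; [| split; [| split]]; auto. exact (L'_stable_R' Hab L1).
Qed.

Lemma pair_equiv_mull a b x : R' a b -> L' (x ** a) a -> pair_equiv a b (x ** a) (x ** b).
Proof.
  intros Hab Hx. destruct (exists_stabilizer (x ** a)) as (k & _ & K).
  exists (k ** x), k. split; [| split; [| split]].
  - symmetry; apply mulSA.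
  - symmetry; apply mulSA.
  - rewrite <- mulSA. exact (L'_trans K Hx).
  - apply L'_sym, Hx.
Qed.

Lemma pair_equiv_diag a b : L' a b -> pair_equiv a a b b.
Proof.
  intro H. destruct (HM1 a b) as (g & d & _ & _ & Eq & Hm).
  exists g, d. split; [| split; [| split]]; auto; exact (meet_L'_L' H Hm).
Qed.

Definition pair_class a b : rel S := fun c d => R' c d /\ pair_equiv a b c d.

Lemma pair_class_eq_iff a b c d :
  R' a b -> R' c d -> (pair_class a b = pair_class c d <-> pair_equiv a b c d).
Proof.
  intros Hab Hcd. split.
  - intro H. assert (K : pair_class c d c d) by (split; [exact Hcd | apply pair_equiv_refl]).
    rewrite <- H in K. apply K.
  - intro H. apply functional_extensionality; intro e.
    apply functional_extensionality; intro f.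
    apply propositional_extensionality. unfold pair_class.
    split; intros [K1 K2]; split; auto.
    + exact (pair_equiv_trans Hab (pair_equiv_sym H) K2).
    + exact (pair_equiv_trans Hcd H K2).
Qed.

Definition Quot : Type := {P : rel S | exists a b, R' a b /\ P = pair_class a b}.

Definition represents (p : Quot) a b : Prop := R' a b /\ proj1_sig p = pair_class a b.

Definition qclass a b (H : R' a b) : Quot :=
  exist _ (pair_class a b) (ex_intro _ a (ex_intro _ b (conj H eq_refl))).

Lemma represents_qclass a b (H : R' a b) : represents (qclass H) a b.
Proof. split; auto. Qed.

Lemma represents_exists p : exists a b, represents p a b.
Proof. destruct p as [P (a & b & H1 & H2)]. exists a, b. split; auto. Qed.

Lemma represents_eq_iff p q a b c d :
  represents p a b -> represents q c d -> (p = q <-> pair_equiv a b c d).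
Proof.
  intros [Hab Hp] [Hcd Hq]. rewrite <- pair_class_eq_iff, <- Hp, <- Hq; auto.
  split; [intros ->; reflexivity |].
  destruct p as [p Hp'], q as [q Hq']. simpl. intros <-. f_equal. apply proof_irrelevance.
Qed.

Lemma represents_inj p q a b : represents p a b -> represents q a b -> p = q.
Proof. intros Hp Hq. apply (represents_eq_iff Hp Hq), pair_equiv_refl. Qed.

Lemma represents_equiv p a b c d :
  represents p a b -> R' c d -> pair_equiv a b c d -> represents p c d.
Proof. intros [Hab Hp] Hcd E. split; auto. rewrite Hp. apply pair_class_eq_iff; auto. Qed.

(* [(a, b) (c, d) = (g a, e d)]: [g b = e c] is a representative of the meet of
   the [L']-classes of [b] and [c], as provided by (M1). *)
Definition glue b c g e : Prop := e ** c = g ** b /\ meet b c (g ** b).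

Lemma glue_exists b c : exists g e, glue b c g e.
Proof. destruct (HM1 b c) as (g & e & _ & _ & Eq & Hm). exists g, e. split; auto. Qed.

Lemma glue_R' a b c d g e : R' a b -> R' c d -> glue b c g e -> R' (g ** a) (e ** d).
Proof.
  intros Hab Hcd [E _]. apply R'_trans with (g ** b); [apply R'_mull, Hab |].
  rewrite <- E. apply R'_mull, Hcd.
Qed.

Lemma glue_indep a b c d g e g' e' : R' a b -> R' c d -> glue b c g e -> glue b c g' e' ->
  pair_equiv (g ** a) (e ** d) (g' ** a) (e' ** d).
Proof.
  intros Hab Hcd [E1 M1] [E2 M2].
  assert (Lgg : L' (g ** b) (g' ** b)) by exact (meet_L' M1 M2).
  destruct (HM1 (g ** b) (g' ** b)) as (u & v & _ & _ & Eq & Hm).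
  assert (G : L' (u ** (g ** b)) (g ** b)) by exact (meet_L'_L' Lgg Hm).
  exists u, v. split; [| split; [| split]].
  - rewrite !mulSA. apply (R'_cancel (R'_sym Hab)). rewrite <- !mulSA. auto.
  - rewrite !mulSA. apply (R'_cancel Hcd). rewrite <- !mulSA, E1, E2. auto.
  - rewrite mulSA. apply (L'_mulr_R' Hab). rewrite <- mulSA. exact G.
  - exact (L'_mulr_R' Hab Lgg).
Qed.

Lemma glue_absorb_l a b c x g e :
  R' a b -> L' (x ** a) a -> glue (x ** b) c g e -> glue b c (g ** x) e.
Proof.
  intros Hab Hx [E M]. split.
  - rewrite E, mulSA. reflexivity.
  - rewrite <- mulSA. exact (meet_L'_args (L'_stable_R' Hab Hx) (L'_refl c) M).
Qed.

Lemma glue_absorb_r b c x g e : L' (x ** c) c -> glue b (x ** c) g e -> glue b c g (e ** x).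
Proof.
  intros Hx [E M]. split.
  - rewrite <- mulSA. exact E.
  - exact (meet_L'_args (L'_refl b) Hx M).
Qed.

Lemma glue_pair_equiv a b c d a' b' c' d' g e g' e' :
  R' a b -> R' c d -> R' a' b' -> R' c' d' ->
  pair_equiv a b a' b' -> pair_equiv c d c' d' ->
  glue b c g e -> glue b' c' g' e' ->
  pair_equiv (g ** a) (e ** d) (g' ** a') (e' ** d').
Proof.
  intros Hab Hcd Hab' Hcd' (x & y & E1 & E2 & L1 & L2) (u & v & F1 & F2 & N1 & N2) C C'.
  assert (Ly : L' (y ** a') a') by (rewrite <- E1; eauto using L'_trans).
  assert (Lv : L' (v ** c') c') by (rewrite <- F1; eauto using L'_trans).
  destruct (glue_exists (x ** b) (u ** c)) as (g1 & e1 & C1).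
  assert (Ca : glue b c (g1 ** x) (e1 ** u))
    by exact (glue_absorb_r N1 (glue_absorb_l Hab L1 C1)).
  assert (Cb : glue b' c' (g1 ** y) (e1 ** v)).
  { apply (glue_absorb_r Lv), (glue_absorb_l Hab' Ly). rewrite <- E2, <- F1. exact C1. }
  apply pair_equiv_trans with (g1 ** x ** a) (e1 ** u ** d).
  { exact (glue_R' Hab Hcd Ca). }
  { exact (glue_indep Hab Hcd C Ca). }
  replace (g1 ** x ** a) with (g1 ** y ** a') by (rewrite <- !mulSA, E1; reflexivity).
  replace (e1 ** u ** d) with (e1 ** v ** d') by (rewrite <- !mulSA, F2; reflexivity).
  exact (glue_indep Hab' Hcd' Cb C').
Qed.

Definition qrep (p : Quot) : S * S :=
  proj1_sig (constructive_indefinite_description _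
    (match represents_exists p with ex_intro _ a (ex_intro _ b H) =>
       ex_intro (fun ab => represents p (fst ab) (snd ab)) (a, b) H end)).

Lemma qrep_spec p : represents p (fst (qrep p)) (snd (qrep p)).
Proof. unfold qrep. destruct constructive_indefinite_description as [ab H]. exact H. Qed.

Definition glue_choice b c : S * S :=
  proj1_sig (constructive_indefinite_description _
    (match glue_exists b c with ex_intro _ g (ex_intro _ e H) =>
       ex_intro (fun ge => glue b c (fst ge) (snd ge)) (g, e) H end)).

Lemma glue_choice_spec b c : glue b c (fst (glue_choice b c)) (snd (glue_choice b c)).
Proof. unfold glue_choice. destruct constructive_indefinite_description as [ge H]. exact H. Qed.

Definition qmul (p q : Quot) : Quot :=
  qclass (glue_R' (proj1 (qrep_spec p)) (proj1 (qrep_spec q)) (glue_choice_spec _ _)).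

Lemma represents_qmul p q a b c d g e :
  represents p a b -> represents q c d -> glue b c g e -> represents (qmul p q) (g ** a) (e ** d).
Proof.
  intros Hp Hq C. pose proof (qrep_spec p) as Rp. pose proof (qrep_spec q) as Rq.
  eapply represents_equiv; [apply represents_qclass | exact (glue_R' (proj1 Hp) (proj1 Hq) C) |].
  apply (glue_pair_equiv (proj1 Rp) (proj1 Rq) (proj1 Hp) (proj1 Hq)).
  - apply (represents_eq_iff Rp Hp). reflexivity.
  - apply (represents_eq_iff Rq Hq). reflexivity.
  - apply glue_choice_spec.
  - exact C.
Qed.

Lemma meet_meet_le b c c' m1 m2 : le c' c -> meet b c m1 -> meet b c' m2 -> meet m1 c' m2.
Proof.
  intros Hc (H1 & H2 & H3) (K1 & K2 & K3).
  split; [apply H3; eauto | split; [exact K2 |]].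
  intros w W1 W2. apply K3; eauto.
Qed.

Lemma meet_meet_ge x d e m n : le x d -> meet d e m -> meet x m n -> meet x e n.
Proof.
  intros Hx (H1 & H2 & H3) (K1 & K2 & K3).
  split; [exact K1 | split; [eauto |]].
  intros w W1 W2. apply K3; eauto.
Qed.

Lemma glue_assoc_L' b c d e g1 e1 g2 e2 g3 e3 g4 e4 : R' c d ->
  glue b c g1 e1 -> glue (e1 ** d) e g2 e2 -> glue d e g3 e3 -> glue b (g3 ** c) g4 e4 ->
  L' (e2 ** e) (e4 ** (e3 ** e)).
Proof.
  intros Hcd [E1 M1] [E2 M2] [E3 M3] [E4 M4].
  rewrite <- E1 in M1. rewrite <- E4, mulSA in M4.
  pose proof (meet_meet_le (HM3 _ _) M1 M4) as Mc.
  apply (meet_mulr_R' Hcd) in Mc.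
  pose proof (meet_meet_ge (HM3 _ _) M3 Mc) as Md.
  rewrite E2, E3, (mulSA e4). exact (meet_L' M2 Md).
Qed.

Lemma qmul_assoc p q r : qmul p (qmul q r) = qmul (qmul p q) r.
Proof.
  destruct (represents_exists p) as (a & b & Hp).
  destruct (represents_exists q) as (c & d & Hq).
  destruct (represents_exists r) as (e & f & Hr).
  pose proof (proj1 Hp) as Hab. pose proof (proj1 Hq) as Hcd. pose proof (proj1 Hr) as Hef.
  destruct (glue_exists b c) as (g1 & e1 & C1).
  destruct (glue_exists (e1 ** d) e) as (g2 & e2 & C2).
  destruct (glue_exists d e) as (g3 & e3 & C3).
  destruct (glue_exists b (g3 ** c)) as (g4 & e4 & C4).
  pose proof (represents_qmul (represents_qmul Hp Hq C1) Hr C2) as Hl.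
  pose proof (represents_qmul Hp (represents_qmul Hq Hr C3) C4) as Hr'.
  apply (represents_eq_iff Hr' Hl), pair_equiv_sym.
  pose proof (glue_assoc_L' Hcd C1 C2 C3 C4) as K.
  destruct C1 as [E1 _], C2 as [E2 _], C3 as [E3 _], C4 as [E4 _].
  destruct (HM1 (e2 ** e) (e4 ** (e3 ** e))) as (X & Y & _ & _ & EXY & M).
  assert (G : L' (X ** (e2 ** e)) (e2 ** e)) by exact (meet_L'_L' K M).
  assert (Ra : R' (e2 ** e) (g2 ** (g1 ** a))).
  { apply R'_sym, R'_trans with (g2 ** (g1 ** b)); [apply R'_mull, R'_mull, Hab |].
    rewrite <- E1, E2. apply R'_mull, R'_mull, Hcd. }
  assert (Rb : R' (e4 ** (e3 ** e)) (g4 ** a)).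
  { apply R'_sym, R'_trans with (g4 ** b); [apply R'_mull, Hab |].
    rewrite <- E4, E3. apply R'_mull, R'_mull, Hcd. }
  (* by (M4), [a] may be replaced by [b] and [c] by [d], reducing this to [EXY] *)
  assert (Ea : X ** (g2 ** (g1 ** a)) = Y ** (g4 ** a)).
  { rewrite !mulSA. apply (R'_cancel (R'_sym Hab)).
    rewrite <- !mulSA, <- E4, <- E1, !mulSA. apply (R'_cancel (R'_sym Hcd)).
    rewrite <- !mulSA, <- E2, <- E3. symmetry. exact EXY. }
  assert (La : L' (X ** (g2 ** (g1 ** a))) (g2 ** (g1 ** a))) by exact (L'_stable_R' Ra G).
  exists X, Y. split; [exact Ea | split; [| split; [exact La |]]].
  - rewrite !mulSA. apply (R'_cancel Hef). rewrite <- !mulSA. symmetry. exact EXY.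
  - apply (L'_trans (L'_sym La)). rewrite Ea. apply (L'_stable_R' Rb).
    rewrite EXY. exact (L'_trans G K).
Qed.

Definition qinv (p : Quot) : Quot := qclass (R'_sym (proj1 (qrep_spec p))).

Lemma represents_qinv p a b : represents p a b -> represents (qinv p) b a.
Proof.
  intro H. pose proof (qrep_spec p) as Rp.
  eapply represents_equiv; [apply represents_qclass | apply R'_sym, H |].
  apply (pair_equiv_swap (proj1 Rp) (proj1 H)), (represents_eq_iff Rp H). reflexivity.
Qed.

Lemma qmul_qinv_qmul p p' a b : represents p a b -> represents p' b a -> qmul (qmul p p') p = p.
Proof.
  intros Hp Hp'. pose proof (proj1 Hp) as Hab.
  destruct (exists_stabilizer b) as (k & _ & Kb).
  assert (C1 : glue b b k k) by (split; [reflexivity | exact (meet_of_L' (L'_refl b) Kb)]).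
  assert (Ka : L' (k ** a) a) by exact (L'_stable_R' (R'_sym Hab) Kb).
  destruct (exists_stabilizer (k ** a)) as (j & _ & Jk).
  assert (C2 : glue (k ** a) a j (j ** k)) by (split; [symmetry; apply mulSA | exact (meet_of_L' Ka Jk)]).
  pose proof (represents_qmul (represents_qmul Hp Hp' C1) Hp C2) as H.
  apply (represents_eq_iff H Hp), pair_equiv_sym. rewrite mulSA.
  apply (pair_equiv_mull Hab). rewrite <- mulSA. exact (L'_trans Jk Ka).
Qed.

Lemma qinv_spec p : is_inverse_of qmul p (qinv p).
Proof.
  destruct (represents_exists p) as (a & b & Hp). pose proof (represents_qinv Hp) as Hi.
  split; [exact (qmul_qinv_qmul Hp Hi) | exact (qmul_qinv_qmul Hi Hp)].
Qed.

Lemma idempotent_diag p : qmul p p = p -> exists a, represents p a a.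
Proof.
  intro Hpp. destruct (represents_exists p) as (a & b & Hp). pose proof (proj1 Hp) as Hab.
  destruct (glue_exists b a) as (g & e & C).
  pose proof (represents_qmul Hp Hp C) as H2.
  assert (E : pair_equiv (g ** a) (e ** b) a b) by exact (proj1 (represents_eq_iff H2 Hp) Hpp).
  pose proof (pair_equiv_L'_snd (glue_R' Hab Hab C) Hab E) as Lb.
  destruct C as [Ce _].
  assert (La : L' (e ** a) a) by exact (L'_stable_R' (R'_sym Hab) Lb).
  destruct E as (X & Y & E1 & E2 & L1 & L2).
  assert (Lg : L' (g ** b) b) by exact (L'_stable_R' Hab L2).
  assert (Lab : L' a b) by (apply (L'_trans (L'_sym La)); rewrite Ce; exact Lg).
  assert (Yb : Y ** b = X ** (e ** a)).
  { rewrite Ce, mulSA. apply (R'_cancel Hab). rewrite <- mulSA. symmetry. exact E1. }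
  assert (XG : L' (X ** g ** a) a) by (rewrite <- mulSA; exact (L'_trans L1 L2)).
  apply (L'_stable_R' Hab) in XG.
  exists a. replace b with a in Hp; [exact Hp |].
  apply (HM6 (ga := X ** e)); [exact Lab | |].
  - rewrite <- mulSA, Ce, mulSA. apply L'_sym, XG.
  - rewrite <- !mulSA, <- Yb. symmetry. exact E2.
Qed.

Lemma diag_qmul_comm p q a c : represents p a a -> represents q c c -> qmul p q = qmul q p.
Proof.
  intros Hp Hq.
  destruct (glue_exists a c) as (g & e & C). pose proof (represents_qmul Hp Hq C) as H1.
  destruct (glue_exists c a) as (g' & e' & C'). pose proof (represents_qmul Hq Hp C') as H2.
  apply (represents_eq_iff H1 H2).
  destruct C as [Ce Cm], C' as [Ce' Cm']. rewrite Ce, Ce'.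
  exact (pair_equiv_diag (meet_L' Cm (meet_comm Cm'))).
Qed.

Lemma quot_inverse_semigroup : inverse_semigroup qmul.
Proof.
  split; [intros p q r; apply qmul_assoc |].
  intro p. exists (qinv p). split; [apply qinv_spec |].
  intros q Hq. apply (inverse_unique_of_idem_comm qmul_assoc) with p; [| apply qinv_spec | exact Hq].
  intros e f He Hf.
  destruct (idempotent_diag He) as (x & Hx), (idempotent_diag Hf) as (y & Hy).
  exact (diag_qmul_comm Hx Hy).
Qed.

Definition stab (a : S) : S :=
  proj1_sig (constructive_indefinite_description _ (exists_stabilizer a)).

Lemma stab_spec a : R' (stab a) (stab a ** a) /\ L' (stab a ** a) a.
Proof. unfold stab. destruct constructive_indefinite_description as [k H]. exact H. Qed.

(* [a] is sent to [k^-1 (k a)] for any [k] with [k R' k a L' a]. *)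
Definition embed (a : S) : Quot := qclass (proj1 (stab_spec a)).

Lemma represents_embed a k : R' k (k ** a) -> L' (k ** a) a -> represents (embed a) k (k ** a).
Proof.
  intros H1 H2. destruct (stab_spec a) as [K1 K2].
  eapply represents_equiv; [apply represents_qclass | exact H1 |].
  assert (Lk : L' (stab a) k) by exact (proj2 (HM5 K1 K2 H1 H2) (R'_refl a)).
  destruct (HM1 (stab a) k) as (u & v & _ & _ & E & M).
  exists u, v. split; [| split; [| split]]; auto.
  - rewrite !mulSA, E. reflexivity.
  - exact (meet_L'_L' Lk M).
Qed.

Lemma embed_inj a b : embed a = embed b -> a = b.
Proof.
  intro H. destruct (stab_spec a) as [Ka La], (stab_spec b) as [Kb Lb].
  destruct (proj1 (represents_eq_iff (represents_embed Ka La) (represents_embed Kb Lb)) H)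
    as (x & y & E1 & E2 & L1 & L2).
  assert (E : x ** stab a ** a = x ** stab a ** b)
    by (rewrite <- !mulSA, E2, !mulSA, <- E1; reflexivity).
  assert (Lb' : L' (x ** stab a ** b) b) by exact (L'_trans (L'_mulr b (L'_trans L1 L2)) Lb).
  apply (HM6 (ga := x ** stab a)); [| rewrite E; apply L'_sym, Lb' | exact E].
  apply (L'_trans (L'_sym La)), (L'_trans (L'_sym (L'_mulr a L1))). rewrite E. exact Lb'.
Qed.

Lemma embed_mul a b : embed (a ** b) = qmul (embed a) (embed b).
Proof.
  destruct (stab_spec a) as [Ka La], (stab_spec b) as [Kb Lb].
  set (k := stab a) in *. set (k' := stab b) in *.
  destruct (glue_exists (k ** a) k') as (u & v & C).
  pose proof (represents_qmul (represents_embed Ka La) (represents_embed Kb Lb) C) as H.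
  destruct C as [Ce Cm].
  assert (E : v ** (k' ** b) = u ** k ** (a ** b)) by (rewrite mulSA, Ce, <- !mulSA; reflexivity).
  rewrite E in H. apply (represents_inj (a := u ** k) (b := u ** k ** (a ** b))); [| exact H].
  apply represents_embed.
  - rewrite <- E. apply R'_trans with (u ** (k ** a)); [apply R'_mull, Ka |].
    rewrite <- Ce. apply R'_mull, Kb.
  - apply (HM2 b) in Cm.
    assert (M : meet (a ** b) b (u ** (k ** a) ** b))
      by exact (meet_L'_args (L'_mulr b La) Lb Cm).
    replace (u ** k ** (a ** b)) with (u ** (k ** a) ** b) by (rewrite !mulSA; reflexivity).
    exact (meet_le_L' (HM3 _ _) M).
Qed.

Lemma qinv_eq_inv p : qinv p = inv quot_inverse_semigroup p.
Proof. apply inv_unique, qinv_spec. Qed.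

Lemma represents_qmul_qinv p a b : represents p a b ->
  exists n, L' n a /\ represents (qmul p (qinv p)) n n.
Proof.
  intro Hp. destruct (exists_stabilizer b) as (j & _ & J).
  assert (C : glue b b j j) by (split; [reflexivity | exact (meet_of_L' (L'_refl b) J)]).
  exists (j ** a). split; [exact (L'_stable_R' (R'_sym (proj1 Hp)) J) |].
  exact (represents_qmul Hp (represents_qinv Hp) C).
Qed.

Lemma represents_qinv_qmul p a b : represents p a b ->
  exists n, L' n b /\ represents (qmul (qinv p) p) n n.
Proof.
  intro Hp. destruct (exists_stabilizer a) as (j & _ & J).
  assert (C : glue a a j j) by (split; [reflexivity | exact (meet_of_L' (L'_refl a) J)]).
  exists (j ** b). split; [exact (L'_stable_R' (proj1 Hp) J) |].
  exact (represents_qmul (represents_qinv Hp) Hp C).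
Qed.

Lemma embed_greenR a b : greenR qmul (embed a) (embed b) <-> R' a b.
Proof.
  rewrite greenR_iff, <- !qinv_eq_inv.
  destruct (stab_spec a) as [Ka La], (stab_spec b) as [Kb Lb].
  destruct (represents_qmul_qinv (represents_embed Ka La)) as (n & Ln & Hn).
  destruct (represents_qmul_qinv (represents_embed Kb Lb)) as (n' & Ln' & Hn').
  rewrite (represents_eq_iff Hn Hn'). split.
  - intro H. apply (HM5 Ka La Kb Lb).
    apply (L'_trans (L'_sym Ln)), (fun K => L'_trans K Ln').
    exact (pair_equiv_L'_snd (R'_refl n) (R'_refl n') H).
  - intro H. apply pair_equiv_diag, (L'_trans Ln), (fun K => L'_trans K (L'_sym Ln')).
    exact (proj2 (HM5 Ka La Kb Lb) H).
Qed.

Lemma embed_greenLle a b : greenLle qmul (embed a) (embed b) <-> le a b.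
Proof.
  rewrite greenLle_iff, <- !qinv_eq_inv.
  destruct (stab_spec a) as [Ka La], (stab_spec b) as [Kb Lb].
  set (k := stab a) in *.
  pose proof (represents_embed Ka La) as Ha.
  destruct (represents_qinv_qmul (represents_embed Kb Lb)) as (n & Ln & Hn).
  apply (fun K => L'_trans K Lb) in Ln.
  destruct (glue_exists (k ** a) n) as (g & d & C).
  pose proof (represents_qmul Ha Hn C) as H.
  destruct C as [Ce Cm]. rewrite Ce, mulSA in H.
  assert (Rg : R' (g ** k) (g ** k ** a)) by (rewrite <- mulSA; apply R'_mull, Ka).
  split.
  - intro E. rewrite E in H.
    pose proof (pair_equiv_L'_snd Rg Ka (proj1 (represents_eq_iff H Ha) eq_refl)) as Lg.
    rewrite <- mulSA in Lg.
    apply (le_trans (proj1 (L'_sym La))), (le_trans (proj1 (L'_sym Lg))).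
    apply (le_trans (proj1 (proj2 Cm))), Ln.
  - intro Hab.
    assert (Lg : L' (g ** (k ** a)) (k ** a)).
    { apply (meet_le_L' (le_trans (proj1 La) (le_trans Hab (proj2 Ln))) Cm). }
    apply (represents_inj H), represents_embed; [exact Rg |].
    rewrite <- mulSA. exact (L'_trans Lg La).
Qed.

Lemma embed_straight : straight_left_I_order qmul embed.
Proof.
  intro q. destruct (represents_exists q) as (a & b & Hq). pose proof (proj1 Hq) as Hab.
  exists a, b, (qinv (embed a)).
  split; [apply qinv_spec | split; [| apply embed_greenR, Hab]].
  destruct (stab_spec a) as [Ka La], (stab_spec b) as [Kb Lb].
  set (k := stab a) in *. set (k' := stab b) in *.
  destruct (glue_exists k k') as (g & d & C).
  pose proof (represents_qmul (represents_qinv (represents_embed Ka La)) (represents_embed Kb Lb) C)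
    as H.
  destruct C as [Ce Cm].
  assert (Lk : L' k k') by exact (proj2 (HM5 Ka La Kb Lb) Hab).
  assert (Lg : L' (g ** k) k) by exact (meet_L'_L' Lk Cm).
  rewrite !mulSA, Ce in H.
  apply (represents_eq_iff Hq H), (pair_equiv_mull Hab).
  exact (L'_trans (L'_mulr a Lg) La).
Qed.

Lemma sufficiency : has_straight_quotient mul R' le.
Proof.
  exists Quot, qmul, embed.
  split; [exact quot_inverse_semigroup |].
  split; [split; [exact embed_inj | exact embed_mul] |].
  split; [exact embed_straight |].
  split; [exact embed_greenR | exact embed_greenLle].
Qed.

End Sufficiency.

Theorem theorem3p7 (S : Type) (mul : S -> S -> S) (Hassoc : assoc_op mul)
  (R' : S -> S -> Prop) (le : S -> S -> Prop) :
  (exists (Q : Type) (mulQ : Q -> Q -> Q) (f : S -> Q),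
      inverse_semigroup mulQ /\ injective_hom mul mulQ f /\
      straight_left_I_order mulQ f /\
      (forall a b, greenR mulQ (f a) (f b) <-> R' a b) /\
      (forall a b, greenLle mulQ (f a) (f b) <-> le a b))
  <->
  (equivalence R' /\ left_compatible mul R' /\
   preorder le /\ classes_meet_semilattice le /\
   (* (M1) *)
   (forall al be, exists ga de,
       R' ga de /\ R' de (mul de be) /\ mul de be = mul ga al /\
       meet_is le al be (mul ga al)) /\
   (* (M2) *)
   (forall al be ga de, meet_is le al be ga ->
       meet_is le (mul al de) (mul be de) (mul ga de)) /\
   (* (M3) *)
   (forall al be, le (mul al be) be) /\
   (* (M4) *)
   (forall a b, R' a b -> Rstar mul a b) /\
   (* (M5) *)
   (forall al be ga de,
       R' ga (mul ga al) -> Lprime le (mul ga al) al ->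
       R' de (mul de be) -> Lprime le (mul de be) be ->
       (Lprime le ga de <-> R' al be)) /\
   (* (M6) *)
   (forall al be ga,
       Lprime le al be -> Lprime le be (mul ga al) -> mul ga al = mul ga be ->
       al = be)).
Proof.
  split.
  - intros (Q & mulQ & f & HQ & Hf & Hst & HR & HL). exact (necessity R' le HQ Hf Hst HR HL).
  - intros (HR'eqv & HR'comp & Hle & _ & HM1 & HM2 & HM3 & HM4 & HM5 & HM6).
    exact (sufficiency Hassoc HR'eqv HR'comp Hle HM1 HM2 HM3 HM4 HM5 HM6).
Qed.
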